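(* Let $G$ be an abelian group that is not finitely generated, let $N=\{1,\alpha,\alpha^2,\alpha^3,\alpha^4=0\}$ be the monogenic monoid generated by $\alpha$ with $\alpha^5=\alpha^4$, let $P=G\times N$ (direct product of monoids), and let $\sim$ be the congruence on $P$ which is the union of equality with $\{((g,\alpha^k),(h,\alpha^k)) : g,h\in G,\ k\in\{3,4\}\}$. Let $S=P/\sim$ (the Fountain monoid). Then an $S$-act $A$ is almost pure if and only if it is absolutely pure.
   Context: A (right) $S$-act is a set $A$ with a map $A\times S\to A$, $(a,s)\mapsto as$, such that $a1=a$ and $a(st)=(as)t$. Given an $S$-act $A$ and a set $X$ of variables, an equation over $A$ is an expression of one of the forms $xs=yt$, $xs=xt$ or $xs=a$ with $x,y\in X$, $s,t\in S$, $a\in A$. If $A$ is a subact of $B$, a solution in $B$ of a set $\Sigma$ of such equations is a family $(b_x)_{x\in X}$ in $B$ with $b_xs=b_yt$ for each $xs=yt\in\Sigma$ and $b_xs=a$ for each $xs=a\in\Sigma$. $\Sigma$ is consistent if it has a solution in some $S$-act containing $A$ as a subact. $A$ is almost pure if every finite consistent set of equations over $A$ in one variable has a solution in $A$, and absolutely pure if every finite consistent set of equations over $A$ has a solution in $A$. *)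

From HB Require Import structures.
From mathcomp Require Import all_boot all_algebra.
Set Implicit Arguments. Unset Strict Implicit. Unset Printing Implicit Defensive.
Import GRing.Theory.
Local Open Scope ring_scope.

Section Fountain.
Variable G : zmodType.

Definition finitely_generated : Prop :=
  exists s : seq G, forall g : G,
    exists c : 'I_(size s) -> int, g = \sum_(i < size s) s`_i *~ c i.

(* P = G x N, with N = {1, a, a^2, a^3, a^4 = 0}, a^5 = a^4;
   the element a^k of N is encoded by k : 'I_5. *)
Definition P := (G * 'I_5)%type.
Definition mulP (p q : P) : P := (p.1 + q.1, inord (minn (p.2 + q.2) 4)).
Definition oneP : P := (0, ord0).

Definition fountain_rel (p q : P) : Prop :=
  p = q \/ (nat_of_ord p.2 = nat_of_ord q.2 /\ (3 <= p.2)%N).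

(* S = P / ~, represented by normal forms: classes of (g,a^k) for k < 3 are
   singletons; the classes of a^3 and a^4 are G x {a^3}, G x {a^4}. *)
Inductive S := SG of G & 'I_3 | S3 | S4.

Definition proj (p : P) : S :=
  if (p.2 < 3)%N then SG p.1 (inord p.2)
  else if nat_of_ord p.2 == 3%N then S3 else S4.

Definition rep (x : S) : P :=
  match x with
  | SG g k => (g, inord k)
  | S3 => (0, inord 3)
  | S4 => (0, inord 4)
  end.

Definition mulS (x y : S) : S := proj (mulP (rep x) (rep y)).
Definition oneS : S := proj oneP.

Definition is_act (A : Type) (act : A -> S -> A) : Prop :=
  (forall a, act a oneS = a) /\ (forall a s t, act a (mulS s t) = act (act a s) t).

(* Equations over A in variables X: x s = y t (covers x s = x t) and x s = a. *)
Inductive equation (X A : Type) :=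
  | EqVar of X & S & X & S
  | EqConst of X & S & A.

Fixpoint inlist (T : Type) (e : T) (l : seq T) : Prop :=
  match l with [::] => False | x :: l' => x = e \/ inlist e l' end.

Definition solves (X A B : Type) (actB : B -> S -> B) (iota : A -> B)
  (b : X -> B) (e : equation X A) : Prop :=
  match e with
  | EqVar x s y t => actB (b x) s = actB (b y) t
  | EqConst x s a => actB (b x) s = iota a
  end.

(* Σ is consistent: it has a solution in some S-act B containing A as a subact
   (A embedded via an injective act morphism iota). *)
Definition consistent (A : Type) (actA : A -> S -> A) (X : Type)
  (Sigma : seq (equation X A)) : Prop :=
  exists (B : Type) (actB : B -> S -> B) (iota : A -> B),
    [/\ is_act actB, injective iota,
        (forall a s, iota (actA a s) = actB (iota a) s) &
        exists b : X -> B, forall e, inlist e Sigma -> solves actB iota b e].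

Definition solvable_in (A : Type) (actA : A -> S -> A) (X : Type)
  (Sigma : seq (equation X A)) : Prop :=
  exists b : X -> A, forall e, inlist e Sigma -> solves actA id b e.

Definition almost_pure (A : Type) (actA : A -> S -> A) : Prop :=
  forall Sigma : seq (equation unit A),
    consistent actA Sigma -> solvable_in actA Sigma.

Definition absolutely_pure (A : Type) (actA : A -> S -> A) : Prop :=
  forall (X : Type) (Sigma : seq (equation X A)),
    consistent actA Sigma -> solvable_in actA Sigma.

End Fountain.

(* Let a finite consistent system Σ be solved by e in an act E containing A.
   Call w ∈ E tame if w ∈ A or w is fixed by S.  Since w α^4 is fixed, w has a
   least depth d with w α^d tame; w α^d is the node of w.  Nodes are grouped
   into orbits under the units G.  In each orbit K choose u_K divisible by the
   largest possible power α^h; in the cofree act S -> E it acquires an h-th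
   root ρ_K (divisibility matters because α^j s forgets the G-part of s once
   the exponent reaches 3).  Every variable x gets a cofactor σ_x ∈ S such that
   ρ_K (σ_x s) depends only on the element e(x) s, and is its image when e(x) s
   is tame.  An equation of Σ whose value lies in A yields one-variable constant
   equations; otherwise its two variables have nodes in the same orbit.  So Σ
   splits into one consistent one-variable system over A per orbit; if c_K
   solves it, x |-> c_K σ_x solves Σ. *)

From mathcomp Require Import all_boot all_algebra zify boolp.
From Stdlib Require Import ClassicalEpsilon.
Set Implicit Arguments. Unset Strict Implicit. Unset Printing Implicit Defensive.
Import GRing.Theory.
Local Open Scope ring_scope.

Section FountainMonoid.
Variable G : zmodType.
Local Notation S := (S G).

(* [mkS g k] is the class of (g, α^k): the exponent is capped at 4, and the
   G-component is forgotten from α^3 on. *)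
Definition mkS (g : G) (k : nat) : S := proj (g, inord (minn k 4)).
Definition level (s : S) : nat := match s with SG _ k => k | S3 => 3 | S4 => 4 end.
Definition gpart (s : S) : G := match s with SG g _ => g | _ => 0 end.

Lemma mkSE g k :
  mkS g k = if (k < 3)%N then SG g (inord k) else if k == 3%N then S3 G else S4 G.
Proof.
have min_lt5 : (minn k 4 < 5)%N by lia.
rewrite /mkS /proj /= inordK //.
case: (ltnP k 3) => hk.
  have -> : minn k 4 = k by lia.
  by rewrite hk.
case: (ltnP k 4) => hk4; first by have -> : k = 3%N by lia.
by have /negbTE -> : k != 3%N by lia.
Qed.

Lemma eq_mkS g g' k k' :
  minn k 4 = minn k' 4 -> ((k < 3)%N -> g = g') -> mkS g k = mkS g' k'.
Proof.
move=> hk hg; rewrite !mkSE.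
case: (ltnP k 3) => h1.
  have -> : (k' < 3)%N by lia.
  by rewrite (hg h1); congr SG; apply: val_inj; rewrite /= !inordK; lia.
have -> : (k' < 3)%N = false by lia.
case: (k =P 3%N) => h3; first by have -> : k' == 3%N by lia.
by have /negbTE -> : k' != 3%N by lia.
Qed.

Lemma mkS_parts s : mkS (gpart s) (level s) = s.
Proof. by case: s => [g k||]; rewrite mkSE //= ltn_ord inord_val. Qed.

Lemma level_mkS g k : level (mkS g k) = minn k 4.
Proof.
rewrite mkSE; case: ltnP => h /=; first by rewrite inordK; lia.
by case: eqP => h' /=; lia.
Qed.

Lemma gpart_mkS g k : gpart (mkS g k) = if (k < 3)%N then g else 0.
Proof. by rewrite mkSE; case: ltnP => //= _; case: eqP. Qed.

Lemma level_le4 s : (level s <= 4)%N.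
Proof. by rewrite -(mkS_parts s) level_mkS geq_minr. Qed.

Lemma mulS_mkS g h k l : mulS (mkS g k) (mkS h l) = mkS (g + h) (k + l).
Proof.
have repE m n : rep (mkS m n) = (if (n < 3)%N then m else 0, inord (minn n 4)).
  rewrite mkSE; case: ltnP => hn /=.
    by congr pair; apply: val_inj; rewrite /= !inordK //; lia.
  by case: eqP => hn' /=; congr pair; apply: val_inj; rewrite /= !inordK //; lia.
have projE (p : P G) : proj p = mkS p.1 p.2.
  case: p => x n; rewrite /mkS /=.
  have -> : minn n 4 = n by have := ltn_ord n; lia.
  by rewrite inord_val.
rewrite /mulS !repE /mulP projE /= !inordK; try lia.
apply: eq_mkS; first lia.
by move=> hkl; have [-> ->] : (k < 3)%N /\ (l < 3)%N by lia.
Qed.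

Lemma oneS_mkS : oneS G = mkS 0 0.
Proof.
by rewrite /oneS /oneP /mkS; congr (proj (_, _)); apply: val_inj; rewrite /= inordK.
Qed.

Lemma mulSA (s t r : S) : mulS (mulS s t) r = mulS s (mulS t r).
Proof.
rewrite -(mkS_parts s) -(mkS_parts t) -(mkS_parts r) !mulS_mkS.
by apply: eq_mkS => [|_]; [lia | rewrite addrA].
Qed.

Lemma mul1S (s : S) : mulS (oneS G) s = s.
Proof. by rewrite oneS_mkS -{1}(mkS_parts s) mulS_mkS add0r add0n mkS_parts. Qed.

End FountainMonoid.

Lemma inlist_filter (T : Type) (p : pred T) (q : T) (l : seq T) :
  inlist q (filter p l) <-> inlist q l /\ p q.
Proof.
elim: l => [|y l IH] /=; first by split=> [[]|[[]]].
case: ifP => py /=; rewrite IH; split.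
- by case=> [<-|[h pq]]; split=> //; [left | right].
- by case=> [[<-|h] pq]; [left | right].
- by case=> h pq; split=> //; right.
- by case=> [[<-|h] pq] //; rewrite pq in py.
Qed.

Lemma inlist_flatten_map (T U : Type) (f : T -> seq U) (q : U) (l : seq T) :
  inlist q (flatten (map f l)) <-> exists2 q', inlist q' l & inlist q (f q').
Proof.
have inlist_cat (l1 l2 : seq U) : inlist q (l1 ++ l2) <-> inlist q l1 \/ inlist q l2.
  by elim: l1 => [|y l1 IH] /=; [split=> [|[[]|]] | rewrite IH]; tauto.
elim: l => [|y l IH] /=; first by split=> [[]|[q' []]].
rewrite inlist_cat IH; split.
- by case=> [h|[q' h1 h2]]; [exists y; [left|] | exists q'; [right|]].
- by case=> q' [<-|h1] h2; [left | right; exists q'].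
Qed.

Section Extension.
Variables (G : zmodType) (E : Type) (actE : E -> S G -> E).
Hypothesis actE_is_act : is_act actE.

Local Notation alpha k := (mkS (0 : G) k).
Local Notation unitS g := (mkS g 0).

Lemma actEM w s t : actE (actE w s) t = actE w (mulS s t).
Proof. by rewrite actE_is_act.2. Qed.

Lemma actE1 w : actE w (mkS 0 0) = w.
Proof. by rewrite -oneS_mkS actE_is_act.1. Qed.

Lemma actE_unitK w g : actE (actE w (unitS g)) (unitS (- g)) = w.
Proof. by rewrite actEM mulS_mkS addrN actE1. Qed.

Definition orbit (v : E) : E -> Prop := fun w => exists g, w = actE v (unitS g).

Lemma orbit_unit v g : orbit (actE v (unitS g)) = orbit v.
Proof.
apply: funext => w; apply: propext; split=> -[h ->].
  by exists (g + h); rewrite actEM mulS_mkS.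
by exists (h - g); rewrite actEM mulS_mkS addrC subrK.
Qed.

Definition divisible (w : E) (h : nat) : Prop := exists b, w = actE b (alpha h).

Lemma divisible_unit w h g : divisible w h -> divisible (actE w (unitS g)) h.
Proof.
case=> b ->; exists (actE b (unitS g)).
by rewrite !actEM !mulS_mkS add0r addr0 addn0.
Qed.

Lemma exists_divisible w : exists j, `[< divisible w j >] && (j <= 4)%N.
Proof. by exists 0%N; rewrite andbT; apply/asboolP; exists w; rewrite actE1. Qed.

Lemma divisible_bounded w j : `[< divisible w j >] && (j <= 4)%N -> (j <= 4)%N.
Proof. by case/andP. Qed.

Definition height (w : E) : nat := ex_maxn (exists_divisible w) (@divisible_bounded w).

Lemma divisible_height w : divisible w (height w) /\ (height w <= 4)%N.
Proof. by rewrite /height; case: ex_maxnP => j /andP[/asboolP]. Qed.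

Lemma leq_height w j : (j <= 4)%N -> divisible w j -> (j <= height w)%N.
Proof.
move=> j_le4 div_j; rewrite /height; case: ex_maxnP => i _; apply.
by rewrite j_le4 andbT; apply/asboolP.
Qed.

Definition coact (f : S G -> E) (s : S G) : S G -> E := fun r => f (mulS s r).
Definition coembed (w : E) : S G -> E := actE w.

Lemma is_act_coact : is_act coact.
Proof.
by split=> [f|f s t]; apply: funext => r; rewrite /coact ?mul1S ?mulSA.
Qed.

Lemma coembed_inj : injective coembed.
Proof. by move=> w w' /(congr1 (fun f => f (oneS G))); rewrite /coembed !actE_is_act.1. Qed.

Lemma coembedM w s : coembed (actE w s) = coact (coembed w) s.
Proof. by apply: funext => r; rewrite /coembed /coact actEM. Qed.

Definition coroot (w : E) (h : nat) : S G -> E :=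
  fun r => actE w (mkS (gpart r) (level r - h)).

Lemma coroot0 w : coroot w 0 = coembed w.
Proof. by apply: funext => r; rewrite /coroot subn0 mkS_parts. Qed.

Lemma coact_coroot w h g k : (h <= 4)%N -> divisible w h ->
  coact (coroot w h) (mkS g k) = coroot (actE w (mkS g (k - h))) (h - k).
Proof.
move=> h_le4 [b ->]; apply: funext => r; rewrite /coact /coroot.
have -> : mulS (mkS g k) r = mkS (g + gpart r) (k + level r) by rewrite -mulS_mkS mkS_parts.
rewrite level_mkS gpart_mkS !actEM !mulS_mkS !add0r.
have := level_le4 r => r_le4; congr actE; apply: eq_mkS => [|lt3]; first lia.
by have -> : (k + level r < 3)%N by lia.
Qed.

Variables (A : Type) (actA : A -> S G -> A) (iota : A -> E).
Hypothesis iotaM : forall a s, iota (actA a s) = actE (iota a) s.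

Definition tame (w : E) : Prop := (exists a, w = iota a) \/ (forall s, actE w s = w).

Lemma tame_act w s : tame w -> tame (actE w s).
Proof.
case=> [[a ->]|fixw]; first by left; exists (actA a s); rewrite iotaM.
by right=> t; rewrite !fixw.
Qed.

Lemma tame_unitK w g : tame (actE w (unitS g)) -> tame w.
Proof. by move=> /(tame_act (unitS (- g))); rewrite actE_unitK. Qed.

Lemma actE_alpha4 w s : actE (actE w (alpha 4)) s = actE w (alpha 4).
Proof.
by rewrite actEM -{1}(mkS_parts s) mulS_mkS; congr actE; apply: eq_mkS; lia.
Qed.

Lemma exists_tame_alpha w : exists j, `[< tame (actE w (alpha j)) >].
Proof. by exists 4%N; apply/asboolP; right; apply: actE_alpha4. Qed.

Definition depth (w : E) : nat := ex_minn (exists_tame_alpha w).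
Definition node (w : E) : E := actE w (alpha (depth w)).

Lemma tame_node w : tame (node w).
Proof. by rewrite /node /depth; case: ex_minnP => j /asboolP. Qed.

Lemma depth_le4 w : (depth w <= 4)%N.
Proof.
by rewrite /depth; case: ex_minnP => j _; apply; apply/asboolP; right; apply: actE_alpha4.
Qed.

Lemma act_ge_depth w s : (depth w <= level s)%N ->
  actE w s = actE (node w) (mkS (gpart s) (level s - depth w)).
Proof.
move=> le_ds; rewrite /node actEM mulS_mkS add0r -{1}(mkS_parts s).
by congr actE; apply: eq_mkS => //; lia.
Qed.

Lemma tame_depth w s : tame (actE w s) <-> (depth w <= level s)%N.
Proof.
split=> [|le_ds]; last by rewrite act_ge_depth //; apply/tame_act/tame_node.
have -> : actE w s = actE (actE w (alpha (level s))) (unitS (gpart s)).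
  by rewrite actEM mulS_mkS add0r addn0 mkS_parts.
by move=> /tame_unitK ?; rewrite /depth; case: ex_minnP => j _; apply; apply/asboolP.
Qed.

Lemma tame_alpha w n : tame (actE w (alpha n)) <-> (depth w <= n)%N.
Proof. by rewrite tame_depth level_mkS; have := depth_le4 w; split; lia. Qed.

Lemma depth_act w s : depth (actE w s) = (depth w - level s)%N.
Proof.
have le_depth i : (depth (actE w s) <= i)%N <-> (depth w - level s <= i)%N.
  rewrite -tame_alpha actEM tame_depth -{1}(mkS_parts s) mulS_mkS level_mkS.
  by have := depth_le4 w; split; lia.
by apply/eqP; rewrite eqn_leq; apply/andP; split; apply/le_depth.
Qed.

Lemma node_act w s :
  node (actE w s) = actE (node w) (mkS (gpart s) (level s - depth w)).
Proof.
rewrite /node depth_act !actEM -{1}(mkS_parts s) !mulS_mkS addr0 add0r.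
have := depth_le4 w; have := level_le4 s.
by move=> ? ?; congr actE; apply: eq_mkS => //; lia.
Qed.

Lemma depth_tame w : tame w -> depth w = 0%N.
Proof. by move=> tame_w; apply/eqP; rewrite -leqn0 -tame_alpha actE1. Qed.

Definition class (w : E) : E -> Prop := orbit (node w).

Lemma class_act w s : ~ (exists a, actE w s = iota a) -> class (actE w s) = class w.
Proof.
move=> notA; rewrite /class node_act.
case: (leqP (depth w) (level s)) => [le_ds|lt_sd]; last first.
  by rewrite (_ : level s - depth w = 0)%N ?orbit_unit //; lia.
(* [node w] is tame but outside A (else so would be [actE w s]), hence fixed. *)
case: (tame_node w) => [[a node_a]|fixed]; last by rewrite fixed.
case: notA; exists (actA a (mkS (gpart s) (level s - depth w))).
by rewrite iotaM -node_a act_ge_depth.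
Qed.

Variable a0 : A.

Definition apex (K : E -> Prop) : E := epsilon (inhabits (iota a0)) K.
Definition root (K : E -> Prop) : S G -> E := coroot (apex K) (height (apex K)).

Lemma apex_class w : exists g, node w = actE (apex (class w)) (unitS g).
Proof.
have [g ->] : class w (apex (class w)).
  by apply: epsilon_spec; exists (node w), 0; rewrite actE1.
by exists (- g); rewrite actE_unitK.
Qed.

Definition offset (w : E) : G :=
  epsilon (inhabits 0) (fun g => node w = actE (apex (class w)) (unitS g)).

Lemma node_apex w : node w = actE (apex (class w)) (unitS (offset w)).
Proof. exact: epsilon_spec (apex_class w). Qed.

Definition cofactor (w : E) : S G := mkS (offset w) (height (apex (class w)) - depth w).

Lemma depth_le_height w : (depth w <= height (apex (class w)))%N.
Proof.
apply: leq_height (depth_le4 w) _.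
rewrite -(actE_unitK (apex _) (offset w)) -node_apex.
by apply: divisible_unit; exists w.
Qed.

Lemma root_cofactor w s : coact (root (class w)) (mulS (cofactor w) s) =
  coroot (node (actE w s)) (depth (actE w s)).
Proof.
have [div_h h_le4] := divisible_height (apex (class w)).
have d_le_h := depth_le_height w.
rewrite /root /cofactor -{1}(mkS_parts s) mulS_mkS coact_coroot //.
rewrite node_act depth_act node_apex actEM mulS_mkS add0n.
by congr coroot; [congr (actE _ (mkS _ _)) |]; lia.
Qed.

Lemma root_cofactor_iota w s a : actE w s = iota a ->
  coact (root (class w)) (mulS (cofactor w) s) = coembed (iota a).
Proof.
move=> ws_a; have tame_ws : tame (actE w s) by left; exists a.
by rewrite root_cofactor /node depth_tame // actE1 coroot0 ws_a.
Qed.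

Hypothesis iota_inj : injective iota.
Hypothesis actA_is_act : is_act actA.
Hypothesis almost_pure_A : almost_pure actA.
Variables (X : Type) (Sigma : seq (equation G X A)) (e : X -> E).
Hypothesis e_solves : forall q, inlist q Sigma -> solves actE iota e q.

Definition preimage (w : E) : A := epsilon (inhabits a0) (fun a => w = iota a).

Definition derived (q : equation G X A) : seq (equation G unit A) :=
  match q with
  | EqVar x s y t =>
    let sx := mulS (cofactor (e x)) s in let ty := mulS (cofactor (e y)) t in
    let a := preimage (actE (e x) s) in
    [:: EqVar A tt sx tt ty; EqConst tt sx a; EqConst tt ty a]
  | EqConst x s a => [:: EqConst tt (mulS (cofactor (e x)) s) a]
  end.

(* Only the derived equations satisfied by [root K] are kept, so [restricted K]
   is consistent by construction and junk values of [preimage] do no harm. *)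
Definition restricted (K : E -> Prop) : seq (equation G unit A) :=
  [seq q <- flatten (map derived Sigma) |
     `[< solves coact (coembed \o iota) (fun=> root K) q >]].

Lemma restricted_consistent K : consistent actA (restricted K).
Proof.
exists (S G -> E), coact, (coembed \o iota); split.
- exact: is_act_coact.
- by move=> a b /coembed_inj /iota_inj.
- by move=> a s /=; rewrite iotaM coembedM.
- by exists (fun=> root K) => q /inlist_filter[_ /asboolP].
Qed.

Definition solves_restricted (K : E -> Prop) (c : A) : Prop :=
  forall q, inlist q (restricted K) -> solves actA id (fun=> c) q.

Definition local_solution (K : E -> Prop) : A :=
  epsilon (inhabits a0) (solves_restricted K).

Lemma local_solutionP K : solves_restricted K (local_solution K).
Proof.
apply: epsilon_spec.
have [b solb] := almost_pure_A (restricted_consistent K).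
by exists (b tt) => q /solb; case: q => [[] s [] t|[] s a].
Qed.

Lemma local_solution_derived K q q' : inlist q Sigma -> inlist q' (derived q) ->
  solves coact (coembed \o iota) (fun=> root K) q' ->
  solves actA id (fun=> local_solution K) q'.
Proof.
move=> q_in q'_in root_q'; apply/local_solutionP/inlist_filter.
by split; [apply/inlist_flatten_map; exists q | apply/asboolP].
Qed.

Lemma solvable_by_classes : solvable_in actA Sigma.
Proof.
exists (fun x => actA (local_solution (class (e x))) (cofactor (e x))) => q q_in.
have := e_solves q_in; case: q q_in => [x s y t|x s a] q_in /=; rewrite -!actA_is_act.2.
- move=> xs_yt; have [inA|notA] := pselect (exists a, actE (e x) s = iota a).
    set a := preimage (actE (e x) s).
    have xs_a : actE (e x) s = iota a := epsilon_spec _ _ inA.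
    have ys_a : actE (e y) t = iota a by rewrite -xs_yt.
    have -> : actA (local_solution (class (e x))) (mulS (cofactor (e x)) s) = a.
      apply: (local_solution_derived (q' := EqConst tt _ a) q_in).
        by right; left.
      exact: root_cofactor_iota.
    apply/esym/(local_solution_derived (q' := EqConst tt _ a) q_in).
      by right; right; left.
    exact: root_cofactor_iota.
  have cls : class (e y) = class (e x).
    by rewrite -(class_act notA) xs_yt class_act // -xs_yt.
  rewrite cls; apply: (local_solution_derived (q' := EqVar A tt _ tt _) q_in); first by left.
  by rewrite /= -{2}cls !root_cofactor xs_yt.
- move=> xs_a; apply: (local_solution_derived (q' := EqConst tt _ a) q_in); first by left.
  exact: root_cofactor_iota.
Qed.

End Extension.

Lemma almost_pure_solvable (G : zmodType) (A : Type) (actA : A -> S G -> A) (a0 : A)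
    (X : Type) (Sigma : seq (equation G X A)) :
  is_act actA -> almost_pure actA -> consistent actA Sigma -> solvable_in actA Sigma.
Proof.
move=> actA_is_act almost_pure_A [B [actB [iota [actB_is_act iota_inj iotaM [b b_solves]]]]].
exact: (solvable_by_classes actB_is_act iotaM a0 iota_inj actA_is_act almost_pure_A b_solves).
Qed.

Lemma almost_pure_inhabited (G : zmodType) (A : Type) (actA : A -> S G -> A)
    (X : Type) (Sigma : seq (equation G X A)) :
  almost_pure actA -> consistent actA Sigma -> X -> inhabited A.
Proof.
move=> almost_pure_A [B [actB [iota [? ? ? [b _]]]]] x0.
have [|c _] := almost_pure_A [::]; last by exists; exact: c tt.
by exists B, actB, iota; split=> //; exists (fun=> b x0).
Qed.

Theorem mainTheorem5 (G : zmodType) (hG : ~ finitely_generated G)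
  (A : Type) (actA : A -> S G -> A) (hA : is_act actA) :
  almost_pure actA <-> absolutely_pure actA.
Proof.
split=> [almost_pure_A X Sigma consistent_Sigma|absolutely_pure_A Sigma].
- have [[x0]|noX] := pselect (inhabited X).
    have [a0] := almost_pure_inhabited almost_pure_A consistent_Sigma x0.
    exact: almost_pure_solvable.
  by exists (fun x => match noX (inhabits x) with end); case=> [x|x] *; case: noX.
- exact: absolutely_pure_A.
Qed.
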